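(* Let $f\in C^1(\mathbb{R})$ satisfy (f1), $f_0\in(0,+\infty)$, $f_\infty=0$, $f'(s)<Nf(s)/s$ for all $s>0$ and $f'(s)>Nf(s)/s$ for all $s<0$. Then every negative solution $u$ of (MO) (for any $\lambda>0$) is stable; hence it is non-degenerate and has Morse index $M(u)=0$.
   Context: Let $N\ge1$ be an integer. For $\lambda\ge0$, problem (MO) is: find $u\in C^2[0,1]$ with $\left((u')^N\right)'=\lambda^N N r^{N-1}f(-u)$ in $(0,1)$, $u'(0)=u(1)=0$. Condition (f1): $f(s)s^N>0$ for $s\neq0$. $f_0^N=\lim_{s\to0}f(s)/s^N$, $f_\infty^N=\lim_{|s|\to\infty}f(s)/s^N$. For a solution $u$ of (MO), set $v=-u$; the linearized eigenvalue problem at $u$ is $\left(-\phi'(-v')^{N-1}\right)'-\lambda^N r^{N-1}f'(v)\phi=\frac{\mu}{N}\phi$ in $(0,1)$, $\phi'(0)=\phi(1)=0$. The solution $u$ is stable if all eigenvalues $\mu$ of this problem are positive, degenerate if $0$ is an eigenvalue, and its Morse index $M(u)$ is the number of negative eigenvalues. *)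

From Stdlib Require Import Reals Lra List.
Import ListNotations.
Open Scope R_scope.

Definition is_deriv01 (f f' : R -> R) : Prop :=
  forall x, 0 <= x <= 1 ->
    forall eps, 0 < eps -> exists delta, 0 < delta /\
      forall y, 0 <= y <= 1 -> y <> x -> Rabs (y - x) < delta ->
        Rabs ((f y - f x) / (y - x) - f' x) < eps.

Definition continuous01 (g : R -> R) : Prop :=
  forall x, 0 <= x <= 1 ->
    forall eps, 0 < eps -> exists delta, 0 < delta /\
      forall y, 0 <= y <= 1 -> Rabs (y - x) < delta -> Rabs (g y - g x) < eps.

Definition C2_01 (u u1 u2 : R -> R) : Prop :=
  is_deriv01 u u1 /\ is_deriv01 u1 u2 /\ continuous01 u2.

Definition MO_solution (N : nat) (f : R -> R) (lam : R) (u u1 : R -> R) : Prop :=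
  exists u2, C2_01 u u1 u2 /\
    (forall r, 0 < r < 1 ->
       derivable_pt_lim (fun t => (u1 t) ^ N) r
         (lam ^ N * INR N * r ^ (N - 1) * f (- u r))) /\
    u1 0 = 0 /\ u 1 = 0.

(* mu is an eigenvalue of the linearized problem at u (v = -u, v' = -u1):
   (-phi' (-v')^(N-1))' - lam^N r^(N-1) f'(v) phi = (mu/N) phi in (0,1),
   phi'(0) = phi(1) = 0, with a nontrivial phi in C^2[0,1]. *)
Definition lin_eigenvalue (N : nat) (df : R -> R) (lam : R) (u u1 : R -> R)
    (mu : R) : Prop :=
  exists phi phi1 phi2, C2_01 phi phi1 phi2 /\
    (exists r, 0 <= r <= 1 /\ phi r <> 0) /\
    phi1 0 = 0 /\ phi 1 = 0 /\
    forall r, 0 < r < 1 ->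
      derivable_pt_lim (fun t => - phi1 t * (- (- u1 t)) ^ (N - 1)) r
        (lam ^ N * r ^ (N - 1) * df (- u r) * phi r + mu / INR N * phi r).

Definition stable N df lam u u1 : Prop :=
  forall mu, lin_eigenvalue N df lam u u1 mu -> 0 < mu.

Definition degenerate N df lam u u1 : Prop := lin_eigenvalue N df lam u u1 0.

Definition morse_index N df lam u u1 (k : nat) : Prop :=
  exists l : list R, NoDup l /\ length l = k /\
    forall mu, In mu l <-> (lin_eigenvalue N df lam u u1 mu /\ mu < 0).

From Stdlib Require Import Reals Lra Lia.
Open Scope R_scope.

(* Let u < 0 solve (MO), so v = -u > 0, and suppose mu <= 0 were an eigenvalue
   of the linearized problem with eigenfunction phi.  With the "Wronskian"
     W = (u')^(N-1) (phi u' - phi' u)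
   the Picone function H = W phi / (-u) satisfies, on (0,1),
     H' = [phi^2 k (-u) + (u')^(N-1) (phi u' - phi' u)^2] / u^2,
     k = lam^N r^(N-1) (N f(v) - v f'(v)) - (mu/N) v,
   and k > 0 because f'(s) < N f(s)/s for s > 0 and mu <= 0; moreover u' > 0
   on (0,1], since ((u')^N)' > 0 and u'(0) = 0.  Hence H' >= 0, with H' > 0
   wherever phi <> 0.  H vanishes at 0 (phi'(0) = u'(0) = 0) and tends to 0 at
   1 (phi/(-u) has the finite limit phi'(1)/(-u'(1)) while W(1) = 0), so H is
   constant, H' = 0, and phi vanishes on (0,1): a contradiction.  The file
   first sets up elementary calculus relative to [0,1] (continuity through the
   clamp [cl], mean value theorem, a 0/0 limit), then the sign facts on u, the
   Picone identity, and finally the theorem. *)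

(* Clamping to [0,1]: turns relative notions on [0,1] into global ones. *)
Definition cl (x : R) : R := Rmax 0 (Rmin 1 x).

Lemma cl_in x : 0 <= cl x <= 1.
Proof. unfold cl, Rmax, Rmin; repeat destruct Rle_dec; lra. Qed.

Lemma cl_id x : 0 <= x <= 1 -> cl x = x.
Proof. intros; unfold cl, Rmax, Rmin; repeat destruct Rle_dec; lra. Qed.

Lemma cl_lip x y : Rabs (cl y - cl x) <= Rabs (y - x).
Proof.
  unfold cl, Rmax, Rmin; repeat destruct Rle_dec;
  unfold Rabs; repeat destruct Rcase_abs; lra.
Qed.

Definition punctured01 (x : R) : R -> Prop := fun y => 0 <= y <= 1 /\ y <> x.

Lemma limit_cont_cl (g : R -> R) (x : R) :
  limit1_in g (punctured01 (cl x)) (g (cl x)) (cl x) ->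
  continuity_pt (fun y => g (cl y)) x.
Proof.
  intros Hlim eps Heps.
  destruct (Hlim eps Heps) as [d [Hd Hclose]].
  exists d; split; [exact Hd|].
  intros y [_ Hy]; simpl in *; unfold Rdist in *.
  destruct (Req_dec (cl y) (cl x)) as [E|Hne].
  - rewrite E, Rminus_diag, Rabs_R0; exact Heps.
  - apply Hclose; split; [split; [apply cl_in | exact Hne]|].
    pose proof (cl_lip x y); lra.
Qed.

Lemma cont_cl_limit (g : R -> R) (x : R) : 0 <= x <= 1 ->
  continuity_pt (fun y => g (cl y)) x -> limit1_in g (punctured01 x) (g x) x.
Proof.
  intros Hx Hc eps Heps.
  destruct (Hc eps Heps) as [d [Hd Hclose]].
  exists d; split; [exact Hd|].
  intros y [[Hy Hyx] Hdist].
  specialize (Hclose y (conj (conj I (not_eq_sym Hyx)) Hdist)).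
  simpl in Hclose. rewrite !cl_id in Hclose by assumption. exact Hclose.
Qed.

Lemma deriv01_quotient (F F' : R -> R) (x : R) : is_deriv01 F F' -> 0 <= x <= 1 ->
  limit1_in (fun y => (F y - F x) / (y - x)) (punctured01 x) (F' x) x.
Proof.
  intros HF Hx eps Heps.
  destruct (HF x Hx eps Heps) as [d [Hd Hclose]].
  exists d; split; [exact Hd|].
  intros y [[Hy Hyx] Hdist]. apply Hclose; assumption.
Qed.

(* Differentiability on [0,1] implies continuity, since F y = F x + q(y) (y - x). *)
Lemma deriv01_continuity (F F' : R -> R) :
  is_deriv01 F F' -> continuity (fun x => F (cl x)).
Proof.
  intros HF x. apply limit_cont_cl.
  set (c := cl x). assert (Hc : 0 <= c <= 1) by apply cl_in.
  replace (F c) with (F c + F' c * (c - c)) by ring.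
  apply (limit1_ext (fun y => F c + (F y - F c) / (y - c) * (y - c))).
  { intros y [_ Hyc]. field. lra. }
  apply limit_plus; [apply (limit_free F)|].
  apply limit_mul; [apply deriv01_quotient; assumption|].
  apply limit_minus; [apply lim_x | apply (limit_free (fun z => z))].
Qed.

Lemma deriv01_interior (F F' : R -> R) (x : R) :
  is_deriv01 F F' -> 0 < x < 1 -> derivable_pt_lim F x (F' x).
Proof.
  intros HF Hx eps Heps.
  destruct (HF x ltac:(lra) eps Heps) as [d [Hd Hclose]].
  assert (Hpos : 0 < Rmin d (Rmin x (1 - x))) by (repeat apply Rmin_pos; lra).
  exists (mkposreal _ Hpos). intros h Hh Hha. simpl in Hha.
  pose proof (Rmin_l d (Rmin x (1 - x))). pose proof (Rmin_r d (Rmin x (1 - x))).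
  pose proof (Rmin_l x (1 - x)). pose proof (Rmin_r x (1 - x)).
  assert (Hb : - x < h < 1 - x) by (unfold Rabs in Hha; destruct Rcase_abs; lra).
  specialize (Hclose (x + h) ltac:(lra) ltac:(lra)).
  replace (x + h - x) with h in Hclose by ring. apply Hclose. lra.
Qed.

Lemma deriv01_opp (F F' : R -> R) :
  is_deriv01 F F' -> is_deriv01 (fun t => - F t) (fun t => - F' t).
Proof.
  intros HF x Hx eps Heps. destruct (HF x Hx eps Heps) as [d [Hd Hclose]].
  exists d; split; [exact Hd|]. intros y Hy Hyx Hdist.
  replace ((- F y - - F x) / (y - x) - - F' x)
    with (- ((F y - F x) / (y - x) - F' x)) by (field; lra).
  rewrite Rabs_Ropp. auto.
Qed.

(* The elementary 0/0 rule: if F x = G x = 0 and G' x <> 0, then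
   F/G -> F'(x)/G'(x) at x.  (Rinv 0 = 0 makes the identity below total.) *)
Lemma quotient_limit (F F' G G' : R -> R) (x : R) :
  is_deriv01 F F' -> is_deriv01 G G' -> 0 <= x <= 1 ->
  F x = 0 -> G x = 0 -> G' x <> 0 ->
  limit1_in (fun y => F y / G y) (punctured01 x) (F' x / G' x) x.
Proof.
  intros HF HG Hx HFx HGx HG'x.
  apply (limit1_ext (fun y => (F y - F x) / (y - x) * / ((G y - G x) / (y - x)))).
  { intros y [_ Hyx]. rewrite HFx, HGx, !Rminus_0_r.
    destruct (Req_dec (G y) 0) as [E|Hne].
    - rewrite E. unfold Rdiv. rewrite Rmult_0_l, !Rinv_0. ring.
    - field. split; [exact Hne | lra]. }
  apply limit_mul; [|apply limit_inv; [|exact HG'x]]; apply deriv01_quotient; assumption.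
Qed.

Lemma mvt01 (F F' : R -> R) (a b : R) : 0 <= a -> a < b -> b <= 1 ->
  (forall x, a <= x <= b -> continuity_pt (fun y => F (cl y)) x) ->
  (forall c, a < c < b -> derivable_pt_lim F c (F' c)) ->
  exists c, a < c < b /\ F b - F a = F' c * (b - a).
Proof.
  intros Ha Hab Hb Hcont Hder.
  assert (Hder_cl : forall c, a < c < b -> derivable_pt_lim (fun y => F (cl y)) c (F' c)).
  { intros c Hc. apply (derivable_pt_lim_locally_ext F _ c 0 1); [lra | | auto].
    intros z Hz. rewrite cl_id; [reflexivity | lra]. }
  pose (pr := fun c (Hc : a < c < b) =>
    exist (fun l => derivable_pt_lim (fun y => F (cl y)) c l) (F' c) (Hder_cl c Hc)).
  destruct (MVT (fun y => F (cl y)) id a b pr (fun c _ => derivable_pt_id c) Hab Hcont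
     (fun c _ => derivable_continuous_pt id c (derivable_pt_id c))) as [c [Hc E]].
  exists c; split; [exact Hc|].
  rewrite derive_pt_id in E. simpl in E. unfold id in E.
  rewrite !cl_id in E by lra. lra.
Qed.

Lemma continuity_pow (g : R -> R) (n : nat) :
  continuity g -> continuity (fun x => g x ^ n).
Proof.
  intros Hg; induction n as [|n IH].
  - apply continuity_const. intros x y; reflexivity.
  - exact (continuity_mult g (fun x => g x ^ n) Hg IH).
Qed.

Lemma nondecreasing_vanishing_ends (H H' : R -> R) :
  (forall x, 0 <= x <= 1 -> continuity_pt (fun y => H (cl y)) x) ->
  (forall r, 0 < r < 1 -> derivable_pt_lim H r (H' r)) ->
  (forall r, 0 < r < 1 -> 0 <= H' r) -> H 0 = 0 -> H 1 = 0 ->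
  forall r, 0 < r < 1 -> H' r = 0.
Proof.
  intros Hcont Hder Hnn H0 H1.
  assert (Hzero : forall r, 0 < r < 1 -> H r = 0).
  { intros r Hr.
    destruct (mvt01 H H' 0 r) as [c [Hc Eleft]]; try lra.
    { intros x Hx; apply Hcont; lra. } { intros c Hc; apply Hder; lra. }
    destruct (mvt01 H H' r 1) as [c' [Hc' Eright]]; try lra.
    { intros x Hx; apply Hcont; lra. } { intros c' Hc'; apply Hder; lra. }
    pose proof (Hnn c ltac:(lra)). pose proof (Hnn c' ltac:(lra)). nra. }
  intros r Hr. apply (uniqueness_limite H r); [apply Hder; exact Hr|].
  apply (derivable_pt_lim_locally_ext (fct_cte 0) H r 0 1);
    [exact Hr | | apply derivable_pt_lim_const].
  intros z Hz. rewrite Hzero by exact Hz. reflexivity.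
Qed.

Lemma nonzero_interior_point (phi : R -> R) :
  continuity (fun y => phi (cl y)) -> phi 1 = 0 ->
  (exists r, 0 <= r <= 1 /\ phi r <> 0) -> exists r, 0 < r < 1 /\ phi r <> 0.
Proof.
  intros Hcont Hphi1 [r [Hr Hphir]].
  destruct (Req_dec r 0) as [->|Hr0].
  - destruct (Hcont 0 (Rabs (phi 0)) (Rabs_pos_lt _ Hphir)) as [d [Hd Hclose]].
    set (y := Rmin (d / 2) (1 / 2)).
    assert (Hy : 0 < y <= d / 2 /\ y <= 1 / 2).
    { unfold y; repeat split; [apply Rmin_pos; lra | apply Rmin_l | apply Rmin_r]. }
    exists y; split; [lra|]. intro Ey.
    specialize (Hclose y). simpl in Hclose; unfold Rdist in Hclose.
    rewrite !cl_id, Ey, Rminus_0_l, Rabs_Ropp in Hclose by lra.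
    assert (Hne : 0 <> y) by lra.
    assert (Hdist : Rabs (y - 0) < d) by (rewrite Rabs_right; lra).
    specialize (Hclose (conj (conj I Hne) Hdist)). lra.
  - destruct (Req_dec r 1) as [->|Hr1]; [contradiction|].
    exists r; split; [lra | exact Hphir].
Qed.

Lemma pow_pred_mul (x : R) (N : nat) : (1 <= N)%nat -> x ^ N = x ^ (N - 1) * x.
Proof. intros HN. destruct N as [|n]; [lia|]. simpl. rewrite Nat.sub_0_r. ring. Qed.

Lemma f1_positive (N : nat) (f : R -> R) :
  (forall s, s <> 0 -> 0 < f s * s ^ N) -> forall s, 0 < s -> 0 < f s.
Proof.
  intros hf1 s Hs. specialize (hf1 s ltac:(lra)). pose proof (pow_lt s N Hs).
  destruct (Rlt_le_dec 0 (f s)) as [|Hle]; [assumption|]. nra.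
Qed.

Lemma slope_nonneg_at_1 (u u1 : R -> R) :
  is_deriv01 u u1 -> (forall r, 0 <= r < 1 -> u r < 0) -> u 1 = 0 -> 0 <= u1 1.
Proof.
  intros Du Hneg Hu1.
  destruct (Rle_lt_dec 0 (u1 1)) as [|Hlt]; [assumption | exfalso].
  destruct (Du 1 ltac:(lra) (- u1 1) ltac:(lra)) as [d [Hd Hclose]].
  set (y := Rmax 0 (1 - d / 2)).
  assert (Hy : 0 <= y < 1 /\ 1 - d / 2 <= y) by (unfold y, Rmax; destruct Rle_dec; lra).
  assert (Hyd : Rabs (y - 1) < d) by (unfold Rabs; destruct Rcase_abs; lra).
  specialize (Hclose y ltac:(lra) ltac:(lra) Hyd).
  rewrite Hu1, Rminus_0_r in Hclose.
  assert (0 < u y / (y - 1)).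
  { replace (u y / (y - 1)) with (- u y / (1 - y)) by (field; lra).
    specialize (Hneg y ltac:(lra)). apply Rdiv_lt_0_compat; lra. }
  unfold Rabs in Hclose; destruct Rcase_abs in Hclose; lra.
Qed.

Definition wronskian (N : nat) (u u1 phi phi1 : R -> R) (t : R) : R :=
  u1 t ^ (N - 1) * (phi t * u1 t - phi1 t * u t).

Definition picone (N : nat) (u u1 phi phi1 : R -> R) (t : R) : R :=
  wronskian N u u1 phi phi1 t * phi t / (- u t).

(* If ((u')^N)' = q and (-phi' (u')^(N-1))' = c phi at r, then W' = phi (q + c u):
   W = (-phi' (u')^(N-1)) u + phi (u')^N and the cross terms cancel. *)
Lemma wronskian_derivative (N : nat) (u u1 phi phi1 : R -> R) (r c q : R) :
  (1 <= N)%nat ->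
  derivable_pt_lim u r (u1 r) -> derivable_pt_lim phi r (phi1 r) ->
  derivable_pt_lim (fun t => - phi1 t * (- (- u1 t)) ^ (N - 1)) r (c * phi r) ->
  derivable_pt_lim (fun t => u1 t ^ N) r q ->
  derivable_pt_lim (wronskian N u u1 phi phi1) r (phi r * (q + c * u r)).
Proof.
  intros hN Du Dphi Dflux_phi Dflux_u.
  replace (phi r * (q + c * u r)) with
    (c * phi r * u r + - phi1 r * (- (- u1 r)) ^ (N - 1) * u1 r
     + (phi1 r * u1 r ^ N + phi r * q))
    by (rewrite Ropp_involutive, (pow_pred_mul (u1 r) N hN); ring).
  pose (P := fun t => - phi1 t * (- (- u1 t)) ^ (N - 1)).
  pose (Q := fun t => u1 t ^ N).
  apply (derivable_pt_lim_ext (P * u + phi * Q)%F).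
  { intro t. unfold wronskian, plus_fct, mult_fct, P, Q.
    rewrite Ropp_involutive, (pow_pred_mul (u1 t) N hN). ring. }
  apply derivable_pt_lim_plus.
  - exact (derivable_pt_lim_mult P u r _ _ Dflux_phi Du).
  - exact (derivable_pt_lim_mult phi Q r _ _ Dphi Dflux_u).
Qed.

Lemma picone_derivative (N : nat) (u u1 phi phi1 : R -> R) (r c q : R) :
  (1 <= N)%nat -> u r <> 0 ->
  derivable_pt_lim u r (u1 r) -> derivable_pt_lim phi r (phi1 r) ->
  derivable_pt_lim (fun t => - phi1 t * (- (- u1 t)) ^ (N - 1)) r (c * phi r) ->
  derivable_pt_lim (fun t => u1 t ^ N) r q ->
  derivable_pt_lim (picone N u u1 phi phi1) r
    ((phi r ^ 2 * (q + c * u r) * (- u r)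
      + u1 r ^ (N - 1) * (phi r * u1 r - phi1 r * u r) ^ 2) / (- u r) ^ 2).
Proof.
  intros hN Hu Du Dphi Dflux_phi Dflux_u.
  set (W := wronskian N u u1 phi phi1).
  replace ((phi r ^ 2 * (q + c * u r) * (- u r)
      + u1 r ^ (N - 1) * (phi r * u1 r - phi1 r * u r) ^ 2) / (- u r) ^ 2)
    with (((phi r * (q + c * u r) * phi r + W r * phi1 r) * (- u r)
           - (- u1 r) * (W r * phi r)) / (- u r)²)
    by (unfold W, wronskian, Rsqr; field; exact Hu).
  apply (derivable_pt_lim_div (W * phi)%F (- u)%F r).
  - apply derivable_pt_lim_mult; [|exact Dphi].
    exact (wronskian_derivative N u u1 phi phi1 r c q hN Du Dphi Dflux_phi Dflux_u).
  - exact (derivable_pt_lim_opp u r (u1 r) Du).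
  - unfold opp_fct. intro E. apply Hu. lra.
Qed.

Lemma picone_rate_sign (p k v w d : R) : 0 < k -> 0 < v -> 0 <= w ->
  0 <= (p ^ 2 * k * v + w * d ^ 2) / v ^ 2 /\
  (p <> 0 -> 0 < (p ^ 2 * k * v + w * d ^ 2) / v ^ 2).
Proof.
  intros Hk Hv Hw.
  assert (Hv2 : 0 < v ^ 2) by (apply pow_lt; exact Hv).
  assert (Hwd : 0 <= w * d ^ 2) by (apply Rmult_le_pos; [exact Hw | apply pow2_ge_0]).
  assert (Hp : 0 <= p ^ 2 * k * v)
    by (apply Rmult_le_pos; [apply Rmult_le_pos; [apply pow2_ge_0 | lra] | lra]).
  split.
  - apply Rmult_le_pos; [lra | left; apply Rinv_0_lt_compat; exact Hv2].
  - intros Hp0. apply Rdiv_lt_0_compat; [|exact Hv2].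
    assert (0 < p ^ 2) by (rewrite <- Rsqr_pow2; apply Rlt_0_sqr; exact Hp0).
    assert (0 < p ^ 2 * k * v) by (apply Rmult_lt_0_compat; [apply Rmult_lt_0_compat |]; lra).
    lra.
Qed.

Lemma wronskian_continuity (N : nat) (u u1 u2 phi phi1 phi2 : R -> R) :
  is_deriv01 u u1 -> is_deriv01 u1 u2 -> is_deriv01 phi phi1 -> is_deriv01 phi1 phi2 ->
  continuity (fun x => wronskian N u u1 phi phi1 (cl x)).
Proof.
  intros Du Du1 Dphi Dphi1.
  pose proof (deriv01_continuity _ _ Du) as Cu.
  pose proof (deriv01_continuity _ _ Du1) as Cu1.
  pose proof (deriv01_continuity _ _ Dphi) as Cphi.
  pose proof (deriv01_continuity _ _ Dphi1) as Cphi1.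
  unfold wronskian.
  apply (continuity_mult (fun x => u1 (cl x) ^ (N - 1))
           (fun x => phi (cl x) * u1 (cl x) - phi1 (cl x) * u (cl x))).
  - exact (continuity_pow _ (N - 1) Cu1).
  - apply (continuity_minus (fun x => phi (cl x) * u1 (cl x))
                            (fun x => phi1 (cl x) * u (cl x)));
      apply continuity_mult; assumption.
Qed.

Section NegativeSolution.

Variables (N : nat) (f df : R -> R) (lam : R) (u u1 u2 : R -> R).
Hypothesis hN : (1 <= N)%nat.
Hypothesis hf1 : forall s, s <> 0 -> 0 < f s * s ^ N.
Hypothesis hpos : forall s, 0 < s -> df s < INR N * f s / s.
Hypothesis hlam : 0 < lam.
Hypothesis Du : is_deriv01 u u1.
Hypothesis Du1 : is_deriv01 u1 u2.
Hypothesis Hflux : forall r, 0 < r < 1 ->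
  derivable_pt_lim (fun t => u1 t ^ N) r (lam ^ N * INR N * r ^ (N - 1) * f (- u r)).
Hypothesis Hu10 : u1 0 = 0.
Hypothesis Hu1 : u 1 = 0.
Hypothesis Hneg : forall r, 0 <= r < 1 -> u r < 0.

(* The flux (u')^N is strictly increasing from 0, since f(-u) > 0. *)
Lemma flux_pos z : 0 < z <= 1 -> 0 < u1 z ^ N.
Proof.
  intros Hz.
  destruct (mvt01 (fun t => u1 t ^ N)
     (fun r => lam ^ N * INR N * r ^ (N - 1) * f (- u r)) 0 z) as [c [Hc E]]; try lra.
  - intros x _. apply (continuity_pow (fun y => u1 (cl y)) N), (deriv01_continuity _ _ Du1).
  - intros c Hc. apply Hflux. lra.
  - rewrite Hu10, pow_i, Rminus_0_r, Rminus_0_r in E by lia. rewrite E.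
    pose proof (pow_lt lam N hlam). pose proof (pow_lt c (N - 1) ltac:(lra)).
    pose proof (lt_0_INR N ltac:(lia)).
    pose proof (f1_positive N f hf1 (- u c) ltac:(specialize (Hneg c ltac:(lra)); lra)).
    repeat apply Rmult_lt_0_compat; lra.
Qed.

(* u' > 0 on (0,1]: it never vanishes there, is >= 0 at 1, and is continuous. *)
Lemma slope_pos r : 0 < r <= 1 -> 0 < u1 r.
Proof.
  assert (Hnz : forall z, 0 < z <= 1 -> u1 z <> 0).
  { intros z Hz E. pose proof (flux_pos z Hz) as Hpos.
    rewrite E, pow_i in Hpos by lia. lra. }
  assert (Hslope1 : 0 < u1 1).
  { pose proof (slope_nonneg_at_1 u u1 Du Hneg Hu1).
    destruct (Rtotal_order (u1 1) 0) as [?|[E|?]];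
      [lra | exfalso; exact (Hnz 1 ltac:(lra) E) | lra]. }
  intros Hr. destruct (Rtotal_order (u1 r) 0) as [Hlt|[E|Hgt]];
    [exfalso | exfalso; exact (Hnz r Hr E) | exact Hgt].
  destruct (IVT (fun x => u1 (cl x)) r 1 (deriv01_continuity _ _ Du1)) as [z [Hz Ez]].
  - destruct (Req_dec r 1) as [->|Hr1]; lra.
  - rewrite cl_id by lra. exact Hlt.
  - rewrite cl_id by lra. exact Hslope1.
  - rewrite cl_id in Ez by lra. apply (Hnz z); [lra | exact Ez].
Qed.

Section Eigenfunction.

Variables (mu : R) (phi phi1 phi2 : R -> R).
Hypothesis hmu : mu <= 0.
Hypothesis Dphi : is_deriv01 phi phi1.
Hypothesis Dphi1 : is_deriv01 phi1 phi2.
Hypothesis Hphi10 : phi1 0 = 0.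
Hypothesis Hphi1 : phi 1 = 0.
Hypothesis Heig : forall r, 0 < r < 1 ->
  derivable_pt_lim (fun t => - phi1 t * (- (- u1 t)) ^ (N - 1)) r
    (lam ^ N * r ^ (N - 1) * df (- u r) * phi r + mu / INR N * phi r).

Let H : R -> R := picone N u u1 phi phi1.

(* The coefficient k = q + c u of phi^2 (-u) in the Picone identity. *)
Let weight (r : R) : R :=
  lam ^ N * INR N * r ^ (N - 1) * f (- u r)
  + (lam ^ N * r ^ (N - 1) * df (- u r) + mu / INR N) * u r.

Let rate (r : R) : R :=
  (phi r ^ 2 * weight r * (- u r)
   + u1 r ^ (N - 1) * (phi r * u1 r - phi1 r * u r) ^ 2) / (- u r) ^ 2.

(* k = lam^N r^(N-1) (N f(v) - v f'(v)) - (mu/N) v > 0 with v = -u > 0. *)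
Lemma weight_pos r : 0 < r < 1 -> 0 < weight r.
Proof.
  intros Hr. unfold weight.
  set (v := - u r). replace (u r) with (- v) by (unfold v; ring).
  assert (Hv : 0 < v) by (unfold v; specialize (Hneg r ltac:(lra)); lra).
  assert (HN : 0 < INR N) by (apply lt_0_INR; lia).
  assert (Hdf : v * df v < INR N * f v).
  { pose proof (Rmult_lt_compat_l v _ _ Hv (hpos v Hv)) as Hlt.
    replace (v * (INR N * f v / v)) with (INR N * f v) in Hlt by (field; lra). exact Hlt. }
  assert (Hscale : 0 < lam ^ N * r ^ (N - 1))
    by (apply Rmult_lt_0_compat; apply pow_lt; lra).
  assert (Hmu' : mu / INR N <= 0)
    by (unfold Rdiv; pose proof (Rinv_0_lt_compat _ HN); nra).
  nra.
Qed.

Lemma picone_has_rate r : 0 < r < 1 -> derivable_pt_lim H r (rate r).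
Proof.
  intros Hr. unfold H, rate, weight.
  apply picone_derivative.
  - exact hN.
  - specialize (Hneg r ltac:(lra)). lra.
  - exact (deriv01_interior u u1 r Du Hr).
  - exact (deriv01_interior phi phi1 r Dphi Hr).
  - replace ((lam ^ N * r ^ (N - 1) * df (- u r) + mu / INR N) * phi r)
      with (lam ^ N * r ^ (N - 1) * df (- u r) * phi r + mu / INR N * phi r) by ring.
    exact (Heig r Hr).
  - exact (Hflux r Hr).
Qed.

Lemma rate_sign r : 0 < r < 1 -> 0 <= rate r /\ (phi r <> 0 -> 0 < rate r).
Proof.
  intros Hr. apply picone_rate_sign.
  - exact (weight_pos r Hr).
  - specialize (Hneg r ltac:(lra)). lra.
  - apply pow_le. left. apply slope_pos. lra.
Qed.

Lemma picone_ends : H 0 = 0 /\ H 1 = 0.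
Proof.
  unfold H, picone, wronskian. rewrite Hu10, Hphi10, Hphi1, Hu1.
  unfold Rdiv. split; ring.
Qed.

(* H is continuous on [0,1]; at 1 it is W (-> 0) times phi/(-u) (-> phi'(1)/(-u'(1))). *)
Lemma picone_continuous x : 0 <= x <= 1 -> continuity_pt (fun y => H (cl y)) x.
Proof.
  intros Hx.
  pose (W := wronskian N u u1 phi phi1).
  assert (CW : continuity (fun y => W (cl y)))
    by exact (wronskian_continuity N u u1 u2 phi phi1 phi2 Du Du1 Dphi Dphi1).
  destruct (Rlt_le_dec x 1) as [Hx1|Hx1].
  - pose (num := fun y => W (cl y) * phi (cl y)).
    pose (den := fun y => - u (cl y)).
    change (continuity_pt (num / den)%F x).
    apply continuity_pt_div.
    + apply (continuity_pt_mult (fun y => W (cl y))); [apply CW|].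
      exact (deriv01_continuity _ _ Dphi x).
    + exact (continuity_pt_opp _ x (deriv01_continuity _ _ Du x)).
    + unfold den. rewrite cl_id by lra. specialize (Hneg x ltac:(lra)). lra.
  - replace x with 1 by lra. apply limit_cont_cl. rewrite cl_id by lra.
    replace (H 1) with (W 1 * (phi1 1 / - u1 1))
      by (rewrite (proj2 picone_ends); unfold W, wronskian; rewrite Hu1, Hphi1; ring).
    apply (limit1_ext (fun y => W y * (phi y / - u y))).
    { intros y _. unfold H, W, picone, Rdiv. ring. }
    apply limit_mul.
    + apply cont_cl_limit; [lra | apply CW].
    + apply (quotient_limit phi phi1 (fun t => - u t) (fun t => - u1 t)).
      * exact Dphi.
      * exact (deriv01_opp u u1 Du).
      * lra.
      * exact Hphi1.
      * rewrite Hu1. apply Ropp_0.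
      * pose proof (slope_pos 1 ltac:(lra)). lra.
Qed.

(* H is nondecreasing with H(0) = H(1) = 0, so H' = 0, which forces phi = 0. *)
Lemma eigenfunction_vanishes r : 0 < r < 1 -> phi r = 0.
Proof.
  intros Hr. destruct (Req_dec (phi r) 0) as [|Hne]; [assumption | exfalso].
  destruct picone_ends as [H0 H1].
  assert (Hflat := nondecreasing_vanishing_ends H rate picone_continuous picone_has_rate
    (fun r Hr => proj1 (rate_sign r Hr)) H0 H1 r Hr).
  pose proof (proj2 (rate_sign r Hr) Hne). lra.
Qed.

End Eigenfunction.

Lemma negative_solution_stable : stable N df lam u u1.
Proof.
  intros mu [phi [phi1 [phi2 [[Dphi [Dphi1 _]] [Hnz [Hphi10 [Hphi1 Heig]]]]]]].
  destruct (Rlt_le_dec 0 mu) as [|Hmu]; [assumption | exfalso].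
  destruct (nonzero_interior_point phi (deriv01_continuity _ _ Dphi) Hphi1 Hnz)
    as [r [Hr Hphir]].
  apply Hphir. eapply eigenfunction_vanishes; eassumption.
Qed.

End NegativeSolution.

Lemma stable_nondegenerate_morse0 (N : nat) (df : R -> R) (lam : R) (u u1 : R -> R) :
  stable N df lam u u1 -> ~ degenerate N df lam u u1 /\ morse_index N df lam u u1 0.
Proof.
  intros Hst. split.
  - intro Hdeg. specialize (Hst 0 Hdeg). lra.
  - exists nil. split; [constructor|]. split; [reflexivity|].
    intros mu; split; [intros []|]. intros [Heig Hmu]. specialize (Hst mu Heig). lra.
Qed.

Theorem lemma5p3 (N : nat) (f df : R -> R)
  (hN : (1 <= N)%nat)
  (* f in C^1(R) with derivative df *)
  (hf_der : forall s, derivable_pt_lim f s (df s))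
  (hdf_cont : continuity df)
  (* (f1) *)
  (hf1 : forall s, s <> 0 -> 0 < f s * s ^ N)
  (* f_0^N in (0, +oo) *)
  (hf0 : exists L, 0 < L /\
     forall eps, 0 < eps -> exists delta, 0 < delta /\
       forall s, s <> 0 -> Rabs s < delta -> Rabs (f s / s ^ N - L) < eps)
  (* f_oo^N = 0 *)
  (hfinf : forall eps, 0 < eps -> exists M, forall s, M < Rabs s ->
       Rabs (f s / s ^ N) < eps)
  (hpos : forall s, 0 < s -> df s < INR N * f s / s)
  (hneg : forall s, s < 0 -> df s > INR N * f s / s) :
  forall (lam : R) (u u1 : R -> R),
    0 < lam ->
    MO_solution N f lam u u1 ->
    (forall r, 0 <= r < 1 -> u r < 0) ->
    stable N df lam u u1 /\ ~ degenerate N df lam u u1 /\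
    morse_index N df lam u u1 0.
Proof.
  intros lam u u1 hlam [u2 [[Du [Du1 _]] [Hflux [Hu10 Hu1]]]] Hneg.
  assert (Hst : stable N df lam u u1)
    by exact (negative_solution_stable N f df lam u u1 u2
                hN hf1 hpos hlam Du Du1 Hflux Hu10 Hu1 Hneg).
  split; [exact Hst | exact (stable_nondegenerate_morse0 N df lam u u1 Hst)].
Qed.
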